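(* There is a bijection between zero-dimensional tropical ideals of degree $3$ in $\mathbb{B}[x_1^{\pm1},\dots,x_n^{\pm1}]$ and pairs $(L,\mathcal{P})$, where $L$ is a sublattice of $\mathbb{Z}^n$ and $\mathcal{P}$ is a $2$-partition of the quotient group $\mathbb{Z}^n/L$ that is invariant under the action of $\mathbb{Z}^n$. The bijection sends a tropical ideal $I$ to the pair $(L_I,\mathcal{H}(\operatorname{si}(\underline{M}(I))))$.
   Context: $\mathbb{B}=\{\infty,0\}$ with $\oplus=\min$ and multiplication $+$; $\operatorname{supp}(f)$ is the set of exponents with coefficient $\neq\infty$. A tropical ideal $I\subset\mathbb{B}[x_1^{\pm1},\dots,x_n^{\pm1}]$ is an ideal such that for all $f,g\in I$ and $\mathbf u\in\operatorname{supp}(f)\cap\operatorname{supp}(g)$ there is $h\in I$ with $\operatorname{supp}(f)\Delta\operatorname{supp}(g)\subset\operatorname{supp}(h)\subset(\operatorname{supp}(f)\cup\operatorname{supp}(g))\setminus\{\mathbf u\}$. Its underlying matroid $\underline M(I)$ is the finitary matroid on $\mathbb{Z}^n$ whose independent sets are those containing no support of a polynomial in $I$. $I$ is zero-dimensional of degree $r$ iff $\underline M(I)$ has finite rank $r$. The binomial lattice is $L_I=\{\mathbf u-\mathbf v:\mathbf x^{\mathbf u}\oplus\mathbf x^{\mathbf v}\in I\}\cup\{\mathbf 0\}$, a sublattice of $\mathbb{Z}^n$. For a loopless finitary matroid $M$ on $E$, $a\sim b$ (parallel) iff $a=b$ or $\{a,b\}$ is a circuit; the simplification $\operatorname{si}(M)$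 is the matroid on $E/\!\sim$ whose circuits are the sets $\{[a_1],\dots,[a_k]\}$ with $\{a_1,\dots,a_k\}$ a circuit of $M$ (here the parallel classes of $\underline M(I)$ are the cosets of $L_I$). $\mathcal H(M)$ denotes the set of hyperplanes (maximal subsets of rank $\operatorname{rank}(M)-1$). A $2$-partition of a set $E$ is a collection of subsets (blocks) with at least two blocks, every block of size $\ge2$, and every $2$-subset of $E$ in exactly one block. $\mathbb{Z}^n$ acts on $\mathbb{Z}^n/L$ by translation, hence on subsets and on collections of subsets; invariance means fixed by all $\mathbf u\in\mathbb{Z}^n$. *)

From HB Require Import structures.
From mathcomp Require Import all_boot all_order all_algebra.
From mathcomp Require Import finmap.
From mathcomp Require Import boolp classical_sets functions.

Set Implicit Arguments.
Unset Strict Implicit.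
Unset Printing Implicit Defensive.

Import GRing.Theory.
Local Open Scope ring_scope.
Local Open Scope classical_set_scope.

Definition Zn (n : nat) := 'rV[int]_n.

(* A polynomial of B[x_1^{+-1},...,x_n^{+-1}], B = ({oo,0}, min, +), is
   determined by its support, a finite subset of Z^n:
   supp (f (+) g) = supp f U supp g,  supp (f (.) g) = supp f + supp g
   (Minkowski sum), the zero polynomial oo has empty support. *)
Definition Bpoly (n : nat) := {fset Zn n}.

Definition Badd n (f g : Bpoly n) : Bpoly n := (f `|` g)%fset.
Definition Bmul n (f g : Bpoly n) : Bpoly n := [fset (a + b)%R | a in f, b in g]%fset.
Definition Bzero n : Bpoly n := fset0.
Definition Bsupp n (f : Bpoly n) : set (Zn n) := [set u | u \in f].

Definition is_ideal n (I : set (Bpoly n)) : Prop :=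
  I (Bzero n) /\
  (forall f g, I f -> I g -> I (Badd f g)) /\
  (forall f g, I f -> I (Bmul g f)).

Definition is_tropical_ideal n (I : set (Bpoly n)) : Prop :=
  is_ideal I /\
  forall f g u, I f -> I g -> Bsupp f u -> Bsupp g u ->
    exists h, I h /\
      ((Bsupp f `\` Bsupp g) `|` (Bsupp g `\` Bsupp f)) `<=` Bsupp h /\
      Bsupp h `<=` ((Bsupp f `|` Bsupp g) `\ u).

Definition rank_ge (E : Type) (indep : set E -> Prop) (A : set E) (k : nat) : Prop :=
  exists f : 'I_k -> E, injective f /\ range f `<=` A /\ indep (range f).

Definition has_rank (E : Type) (indep : set E -> Prop) (A : set E) (r : nat) : Prop :=
  rank_ge indep A r /\ ~ rank_ge indep A r.+1.

Definition hyperplanes (E : Type) (indep : set E -> Prop) (G : set E) : set (set E) :=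
  [set H | exists r, has_rank indep G r /\ H `<=` G /\ has_rank indep H r.-1 /\
     forall H', H `<=` H' -> H' `<=` G -> has_rank indep H' r.-1 -> H' = H].

Definition indep_of_circuits (E : Type) (circ : set (set E)) (A : set E) : Prop :=
  forall C, circ C -> ~ (C `<=` A).

Definition indepM n (I : set (Bpoly n)) (A : set (Zn n)) : Prop :=
  forall f, I f -> f != Bzero n -> ~ (Bsupp f `<=` A).

Definition circM n (I : set (Bpoly n)) (C : set (Zn n)) : Prop :=
  ~ indepM I C /\ forall D, D `<` C -> indepM I D.

Definition zero_dim_of_degree n (I : set (Bpoly n)) (r : nat) : Prop :=
  has_rank (indepM I) setT r.

Definition binomial_lattice n (I : set (Bpoly n)) : set (Zn n) :=
  [set w | w = 0 \/ exists u v, I [fset u; v]%fset /\ w = u - v].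

Definition parallel n (I : set (Bpoly n)) (a b : Zn n) : Prop :=
  a = b \/ circM I [set a; b].

Definition pclass n (I : set (Bpoly n)) (a : Zn n) : set (Zn n) :=
  [set b | parallel I a b].

Definition si_ground n (I : set (Bpoly n)) : set (set (Zn n)) := range (pclass I).

Definition si_circuits n (I : set (Bpoly n)) : set (set (set (Zn n))) :=
  [set D | exists C, circM I C /\
     (forall a b, C a -> C b -> pclass I a = pclass I b -> a = b) /\
     D = pclass I @` C].

Definition si_hyperplanes n (I : set (Bpoly n)) : set (set (set (Zn n))) :=
  hyperplanes (fun A => A `<=` si_ground I /\ indep_of_circuits (si_circuits I) A)
              (si_ground I).

Definition is_sublattice n (L : set (Zn n)) : Prop :=
  L 0 /\ forall a b, L a -> L b -> L (a - b).

Definition coset n (L : set (Zn n)) (a : Zn n) : set (Zn n) := [set b | L (b - a)].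

Definition quotient n (L : set (Zn n)) : set (set (Zn n)) := range (coset L).

Definition two_partition (T : Type) (G : set T) (P : set (set T)) : Prop :=
  (forall B, P B -> B `<=` G) /\
  (exists B1 B2, P B1 /\ P B2 /\ B1 <> B2) /\
  (forall B, P B -> exists a b, B a /\ B b /\ a <> b) /\
  (forall a b, G a -> G b -> a <> b -> exists! B, P B /\ B a /\ B b).

Definition transl n (u : Zn n) (C : set (Zn n)) : set (Zn n) := [set b | C (b - u)].

Definition invariant_collection n (P : set (set (set (Zn n)))) : Prop :=
  forall u : Zn n, (fun B => transl u @` B) @` P = P.

Definition admissible_pair n (LP : set (Zn n) * set (set (set (Zn n)))) : Prop :=
  is_sublattice LP.1 /\ two_partition (quotient LP.1) LP.2 /\ invariant_collection LP.2.

Definition zd3_tropical_ideal n (I : set (Bpoly n)) : Prop :=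
  is_tropical_ideal I /\ zero_dim_of_degree I 3.

Definition Phi n (I : set (Bpoly n)) : set (Zn n) * set (set (set (Zn n))) :=
  (binomial_lattice I, si_hyperplanes I).

From mathcomp Require Import all_boot all_order all_algebra.
From mathcomp Require Import finmap.
From mathcomp Require Import boolp classical_sets functions.

(* A 2-partition P of a set G is the same thing as a simple rank-3 matroid on
   G whose hyperplanes ("lines") are the blocks of P: a set is independent iff
   it has at most three points, no three of them on a common block.

   The
      hyperplanes of the associated matroid are exactly the blocks.
   2. Given a sublattice L and an invariant 2-partition P of Z^n/L, the
      polynomials whose support is a union of circuits of the pulled-back
      matroid form a tropical ideal [cyclic_ideal L P] of degree 3 with
      binomial lattice L; for any ideal with this matroid, the parallel
      classes are the cosets of L and si(M(I)) has hyperplanes P.  This is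
      surjectivity.
   3. Conversely, for a degree-3 tropical ideal I, the sets of cosets
      connected by trinomials of I form an invariant 2-partition of Z^n/L_I
      whose pulled-back matroid is M(I); so Phi I is admissible.
   4. A tropical ideal is determined by the circuits of its matroid, and M(I)
      is determined by Phi I, which gives injectivity. *)

Set Implicit Arguments.
Unset Strict Implicit.
Unset Printing Implicit Defensive.

Import GRing.Theory.
Local Open Scope ring_scope.
Local Open Scope classical_set_scope.

Section LinearSpace.
Variables (T : Type) (P : set (set T)).

Definition collinear (X Y Z : T) : Prop := exists B, P B /\ B X /\ B Y /\ B Z.

Definition noncollinear (X Y Z : T) : Prop :=
  X <> Y /\ X <> Z /\ Y <> Z /\ ~ collinear X Y Z.

(* Closure in the rank-3 matroid with lines P: a point is spanned by K if it
   is in K, on a line through two points of K, or K spans everything because it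
   contains a noncollinear triple. *)
Definition span (K : set T) (Z : T) : Prop :=
  K Z \/ (exists X Y, K X /\ K Y /\ X <> Y /\ collinear X Y Z) \/
  (exists X Y W, K X /\ K Y /\ K W /\ noncollinear X Y W).

Lemma collinear12 X Y Z : collinear X Y Z -> collinear Y X Z.
Proof. by case=> B [? [? [? ?]]]; exists B. Qed.

Lemma collinear23 X Y Z : collinear X Y Z -> collinear X Z Y.
Proof. by case=> B [? [? [? ?]]]; exists B. Qed.

Lemma noncollinear12 X Y Z : noncollinear X Y Z -> noncollinear Y X Z.
Proof.
case=> [XY [XZ [YZ nc]]]; do 3?split=> //; first exact: nesym.
by move/collinear12.
Qed.

Lemma noncollinear23 X Y Z : noncollinear X Y Z -> noncollinear X Z Y.
Proof.
case=> [XY [XZ [YZ nc]]]; do 3?split=> //; first exact: nesym.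
by move/collinear23.
Qed.

Lemma span_mono K K' : K `<=` K' -> span K `<=` span K'.
Proof.
move=> sKK' Z [KZ|[[X [Y [KX [KY H]]]]|[X [Y [W [KX [KY [KW H]]]]]]]].
- by left; apply: sKK'.
- by right; left; exists X, Y; do !split=> //; apply: sKK'.
- by right; right; exists X, Y, W; do !split=> //; apply: sKK'.
Qed.

Lemma span_full K X Y W Z : K X -> K Y -> K W -> noncollinear X Y W -> span K Z.
Proof. by move=> *; right; right; exists X, Y, W. Qed.

Lemma span_exchange_noncollinear K X1 X2 Z Y :
  K X1 -> K X2 -> noncollinear X1 X2 Z -> ~ span K Y -> span (K `|` [set Y]) Z.
Proof.
move=> K1 K2 [X12 _] nY.
have nKY : ~ K Y by move=> KY; apply: nY; left.
apply: (@span_full _ X1 X2 Y); [by left|by left|by right|].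
do 3?split=> //; try by move=> e; subst Y.
by move=> c; apply: nY; right; left; exists X1, X2.
Qed.

Lemma span_exchange K Z Y : span (K `|` [set Z]) Y -> ~ span K Y -> span (K `|` [set Y]) Z.
Proof.
move=> cY nY; have nKY : ~ K Y by move=> KY; apply: nY; left.
case: cY => [[KY|->]|[[X1 [X2 [k1 [k2 [d c]]]]]|[X1 [X2 [X3 [k1 [k2 [k3 nc]]]]]]]] //.
- by left; right.
- case: k1 => [k1|e1]; case: k2 => [k2|e2].
  + by case: nY; right; left; exists X1, X2.
  + rewrite e2 in d c; right; left; exists X1, Y.
    by do !split; [left|right| move=> e; subst Y|exact: collinear23].
  + rewrite e1 in d c; right; left; exists X2, Y.
    by do !split; [left|right| move=> e; subst Y|exact: collinear23 (collinear12 c)].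
  + by rewrite e1 e2 in d.
- case: k1 => [k1|e1]; case: k2 => [k2|e2]; case: k3 => [k3|e3].
  + by case: nY; exact: span_full k1 k2 k3 nc.
  + by rewrite e3 in nc; exact: span_exchange_noncollinear k1 k2 nc nY.
  + by rewrite e2 in nc; exact: span_exchange_noncollinear k1 k3 (noncollinear23 nc) nY.
  + by case: nc => _ [_ [+ _]]; rewrite e2 e3.
  + rewrite e1 in nc.
    exact: span_exchange_noncollinear k2 k3 (noncollinear23 (noncollinear12 nc)) nY.
  + by case: nc => _ [+ _]; rewrite e1 e3.
  + by case: nc => + _; rewrite e1 e2.
  + by case: nc => + _; rewrite e1 e2.
Qed.

Variable G : set T.
Hypothesis tpP : two_partition G P.

Lemma block_sub B X : P B -> B X -> G X.
Proof. by case: tpP => H _ PB BX; apply: H PB _ BX. Qed.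

Lemma block_unique B B' X Y :
  P B -> P B' -> B X -> B Y -> B' X -> B' Y -> X <> Y -> B = B'.
Proof.
move=> PB PB' BX BY B'X B'Y XY.
have [_ [_ [_ H]]] := tpP.
have [B0 [_ U]] := H X Y (block_sub PB BX) (block_sub PB BY) XY.
by rewrite -(U B) // -(U B').
Qed.

Lemma block_through X Y : G X -> G Y -> X <> Y -> exists B, P B /\ B X /\ B Y.
Proof.
have [_ [_ [_ H]]] := tpP => GX GY XY.
by have [B [? _]] := H X Y GX GY XY; exists B.
Qed.

Lemma noncollinear_of_not_collinear X1 X2 Z : G X1 -> G X2 -> X1 <> X2 ->
  ~ collinear X1 X2 Z -> noncollinear X1 X2 Z.
Proof.
move=> G1 G2 X12 nc; have [B [PB [B1 B2]]] := block_through G1 G2 X12.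
split=> //; split; last split=> //.
- by move=> e; subst Z; apply: nc; exists B.
- by move=> e; subst Z; apply: nc; exists B.
Qed.

Lemma noncollinear_off_block B W1 W2 X : P B -> B W1 -> B W2 -> W1 <> W2 -> ~ B X ->
  noncollinear W1 W2 X.
Proof.
move=> PB B1 B2 W12 nX; do 3?split=> //; try by move=> e; subst X.
by case=> B' [PB' [b1 [b2 bX]]]; apply: nX; rewrite (block_unique PB PB' B1 B2 b1 b2 W12).
Qed.

(* A 2-partition has a noncollinear triple (it has two distinct lines). *)
Lemma exists_noncollinear : exists X Y Z, G X /\ G Y /\ G Z /\ noncollinear X Y Z.
Proof.
have [_ [[B1 [B2 [P1 [P2 B12]]]] [H2 _]]] := tpP.
have [X [Y [BX [BY XY]]]] := H2 _ P1; have [U [V [BU [BV UV]]]] := H2 _ P2.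
have GX := block_sub P1 BX; have GY := block_sub P1 BY.
have [B1U|nB1U] := EM (B1 U); last first.
  by exists X, Y, U; do 3?split=> //; [exact: block_sub P2 BU|exact: noncollinear_off_block P1 BX BY XY nB1U].
have [B1V|nB1V] := EM (B1 V); last first.
  by exists X, Y, V; do 3?split=> //; [exact: block_sub P2 BV|exact: noncollinear_off_block P1 BX BY XY nB1V].
by case: B12; exact: block_unique P1 P2 B1U B1V BU BV UV.
Qed.

Lemma span_absorb_collinear K X1 U Y : K `<=` G ->
  K X1 -> X1 <> U -> collinear X1 U Y -> span K U -> span K Y.
Proof.
move=> KG K1 X1U [B [PB [B1 [BU BY]]]].
case=> [KU|[[W1 [W2 [KW1 [KW2 [W12 [B' [PB' [b1 [b2 bU]]]]]]]]]|H]]; last by right; right.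
  by right; left; exists X1, U; do !split=> //; exists B.
have [bX1|nbX1] := EM (B' X1); last exact: span_full KW1 KW2 K1 (noncollinear_off_block PB' b1 b2 W12 nbX1).
have eB := block_unique PB PB' B1 BU bX1 bU X1U.
by right; left; exists W1, W2; do !split=> //; exists B'; do !split=> //; rewrite -eB.
Qed.

Lemma span_absorb_noncollinear K X1 X2 U Y : K `<=` G ->
  K X1 -> K X2 -> noncollinear X1 X2 U -> span K U -> span K Y.
Proof.
move=> KG K1 K2 nc.
case=> [KU|[[W1 [W2 [KW1 [KW2 [W12 [B' [PB' [b1 [b2 bU]]]]]]]]]|H]]; last by right; right.
  exact: span_full K1 K2 KU nc.
have [X12 [_ [_ nc']]] := nc.
have [B0 [PB0 [B01 B02]]] := block_through (KG _ K1) (KG _ K2) X12.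
have [h1|h1] := EM (B0 W1); last exact: span_full K1 K2 KW1 (noncollinear_off_block PB0 B01 B02 X12 h1).
have [h2|h2] := EM (B0 W2); last exact: span_full K1 K2 KW2 (noncollinear_off_block PB0 B01 B02 X12 h2).
by case: nc'; exists B0; do !split=> //; rewrite (block_unique PB0 PB' h1 h2 b1 b2 W12).
Qed.

Lemma span_absorb K U Y : K `<=` G -> span K U -> span (K `|` [set U]) Y -> span K Y.
Proof.
move=> KG cU [[KY|->]|[[X1 [X2 [k1 [k2 [d c]]]]]|[X1 [X2 [X3 [k1 [k2 [k3 nc]]]]]]]] //.
- by left.
- case: k1 => [k1|->] in d c *; case: k2 => [k2|->] in d c *.
  + by right; left; exists X1, X2.
  + exact: span_absorb_collinear KG k1 d c cU.
  + exact: span_absorb_collinear KG k2 (nesym d) (collinear12 c) cU.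
  + by [].
- case: k1 => [k1|e1]; case: k2 => [k2|e2]; case: k3 => [k3|e3].
  + exact: span_full k1 k2 k3 nc.
  + rewrite e3 in nc; exact: span_absorb_noncollinear KG k1 k2 nc cU.
  + rewrite e2 in nc; exact: span_absorb_noncollinear KG k1 k3 (noncollinear23 nc) cU.
  + by case: nc => _ [_ [+ _]]; rewrite e2 e3.
  + rewrite e1 in nc.
    exact: span_absorb_noncollinear KG k2 k3 (noncollinear23 (noncollinear12 nc)) cU.
  + by case: nc => _ [+ _]; rewrite e1 e3.
  + by case: nc => + _; rewrite e1 e2.
  + by case: nc => + _; rewrite e1 e2.
Qed.

End LinearSpace.

Section SmallRanks.
Variable T : Type.

Definition listing (k : nat) (s : seq T) (x0 : T) : 'I_k -> T := fun i => nth x0 s i.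
Arguments listing : clear implicits.

Lemma ord2_cases (i : 'I_2) : i = inord 0 \/ i = inord 1.
Proof. by case: i => [[|[|m]] Hi]; [left|right|by []]; apply: val_inj; rewrite /= inordK. Qed.

Lemma ord3_cases (i : 'I_3) : i = inord 0 \/ i = inord 1 \/ i = inord 2.
Proof.
by case: i => [[|[|[|m]]] Hi]; [left|right; left|right; right|by []];
  apply: val_inj; rewrite /= inordK.
Qed.

Lemma ord4_cases (i : 'I_4) : i = inord 0 \/ i = inord 1 \/ i = inord 2 \/ i = inord 3.
Proof.
by case: i => [[|[|[|[|m]]]] Hi]; [left|right; left|right; right; left|right; right; right|by []];
  apply: val_inj; rewrite /= inordK.
Qed.

Lemma listing_ord n (s : seq T) x0 k : (k < n.+1)%N -> listing n.+1 s x0 (inord k) = nth x0 s k.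
Proof. by move=> kn; rewrite /listing inordK. Qed.

Lemma range_listing2 (a b : T) : range (listing 2 [:: a; b] a) = [set a; b].
Proof.
apply/seteqP; split=> x.
  by case=> i _ <-; case: (ord2_cases i) => ->; rewrite listing_ord //; [left|right].
by case=> ->; [exists (inord 0)|exists (inord 1)]; rewrite // listing_ord.
Qed.

Lemma range_listing3 (a b c : T) : range (listing 3 [:: a; b; c] a) = [set a; b; c].
Proof.
apply/seteqP; split=> x.
  case=> i _ <-; case: (ord3_cases i) => [|[|]] ->; rewrite listing_ord //;
  by [left; left|left; right|right].
by case=> [[|]|] ->; [exists (inord 0)|exists (inord 1)|exists (inord 2)]; rewrite // listing_ord.
Qed.

Lemma range_listing4 (a b c d : T) : range (listing 4 [:: a; b; c; d] a) = [set a; b; c; d].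
Proof.
apply/seteqP; split=> x.
  case=> i _ <-; case: (ord4_cases i) => [|[|[|]]] ->; rewrite listing_ord //;
  by [left; left; left|left; left; right|left; right|right].
by case=> [[[|]|]|] ->; [exists (inord 0)|exists (inord 1)|exists (inord 2)|exists (inord 3)];
  rewrite // listing_ord.
Qed.

Lemma listing2_inj (a b : T) : a <> b -> injective (listing 2 [:: a; b] a).
Proof.
move=> ab i j; case: (ord2_cases i) => ->; case: (ord2_cases j) => ->;
by rewrite !listing_ord //= => e; congruence.
Qed.

Lemma listing3_inj (a b c : T) : a <> b -> a <> c -> b <> c ->
  injective (listing 3 [:: a; b; c] a).
Proof.
move=> ab ac bc i j; case: (ord3_cases i) => [|[|]] ->; case: (ord3_cases j) => [|[|]] ->;
by rewrite !listing_ord //= => e; congruence.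
Qed.

Lemma listing4_inj (a b c d : T) : a <> b -> a <> c -> a <> d -> b <> c -> b <> d -> c <> d ->
  injective (listing 4 [:: a; b; c; d] a).
Proof.
move=> ab ac ad bc bd cd i j.
case: (ord4_cases i) => [|[|[|]]] ->; case: (ord4_cases j) => [|[|[|]]] ->;
by rewrite !listing_ord //= => e; congruence.
Qed.

Variable indep : set T -> Prop.

Lemma rank_ge2P A : rank_ge indep A 2 <->
  exists a b, a <> b /\ A a /\ A b /\ indep [set a; b].
Proof.
split=> [[f [fi [fA fI]]]|[a [b [ab [Aa [Ab I]]]]]].
  exists (f (inord 0)), (f (inord 1)); split; first by move/fi/(congr1 val); rewrite /= !inordK.
  do 2?(split; first by apply: fA; eexists).
  congr indep: fI; apply/seteqP; split=> x.
    by case=> i _ <-; case: (ord2_cases i) => ->; [left|right].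
  by case=> ->; eexists.
exists (listing 2 [:: a; b] a); split; first exact: listing2_inj.
by rewrite range_listing2; split=> // x [] ->.
Qed.

Lemma rank_ge3P A : rank_ge indep A 3 <->
  exists a b c, a <> b /\ a <> c /\ b <> c /\ A a /\ A b /\ A c /\ indep [set a; b; c].
Proof.
split=> [[f [fi [fA fI]]]|[a [b [c [ab [ac [bc [Aa [Ab [Ac I]]]]]]]]]].
  exists (f (inord 0)), (f (inord 1)), (f (inord 2)).
  do 3?(split; first by move/fi/(congr1 val); rewrite /= !inordK).
  do 3?(split; first by apply: fA; eexists).
  congr indep: fI; apply/seteqP; split=> x.
    by case=> i _ <-; case: (ord3_cases i) => [|[|]] ->; [left; left|left; right|right].
  by case=> [[|]|] ->; eexists.
exists (listing 3 [:: a; b; c] a); split; first exact: listing3_inj.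
by rewrite range_listing3; split=> // x [[|]|] ->.
Qed.

Lemma rank_ge4_distinct A : rank_ge indep A 4 ->
  exists a b c d, [/\ a <> b, a <> c, a <> d, b <> c & b <> d] /\ c <> d /\
    indep [set a; b; c; d].
Proof.
case=> f [fi [_ fI]]; exists (f (inord 0)), (f (inord 1)), (f (inord 2)), (f (inord 3)).
split; first by split; move/fi/(congr1 val); rewrite /= !inordK.
split; first by move/fi/(congr1 val); rewrite /= !inordK.
congr indep: fI; apply/seteqP; split=> x.
  by case=> i _ <-; case: (ord4_cases i) => [|[|[|]]] ->;
    [left; left; left|left; left; right|left; right|right].
by case=> [[[|]|]|] ->; eexists.
Qed.

Lemma rank_ge4_of A a b c d : a <> b -> a <> c -> a <> d -> b <> c -> b <> d -> c <> d ->
  A a -> A b -> A c -> A d -> indep [set a; b; c; d] -> rank_ge indep A 4.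
Proof.
move=> ab ac ad bc bd cd Aa Ab Ac Ad I; exists (listing 4 [:: a; b; c; d] a).
split; first exact: listing4_inj.
by rewrite range_listing4; split=> // x [[[|]|]|] ->.
Qed.

Lemma rank_ge_le A k j : (forall S S', S `<=` S' -> indep S' -> indep S) ->
  (j <= k)%N -> rank_ge indep A k -> rank_ge indep A j.
Proof.
move=> dc jk [f [fi [fA fI]]]; exists (fun i => f (widen_ord jk i)); split.
  by move=> i i' /fi /(congr1 val) /= e; apply: val_inj.
split; first by move=> x [i _ <-]; apply: fA; eexists.
by apply: dc fI => x [i _ <-]; eexists.
Qed.

End SmallRanks.

Lemma set3_cover T (X Y Z A B C W : T) :
  [set X; Y; Z] A -> [set X; Y; Z] B -> [set X; Y; Z] C -> A <> B -> A <> C -> B <> C ->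
  [set X; Y; Z] W -> W = A \/ W = B \/ W = C.
Proof.
by move=> [[->|->]|->] [[->|->]|->] [[->|->]|->] ab ac bc [[->|->]|->];
  first [by left | by right; left | by right; right | exfalso; congruence].
Qed.

Lemma set3_no4 T (X Y Z A B C D : T) :
  [set X; Y; Z] A -> [set X; Y; Z] B -> [set X; Y; Z] C -> [set X; Y; Z] D ->
  A <> B -> A <> C -> A <> D -> B <> C -> B <> D -> C <> D -> False.
Proof. by move=> [[->|->]|->] [[->|->]|->] [[->|->]|->] [[->|->]|->]; congruence. Qed.

Lemma set2_no3 T (X Y A B C : T) :
  [set X; Y] A -> [set X; Y] B -> [set X; Y] C -> A <> B -> A <> C -> B <> C -> False.
Proof. by move=> [->|->] [->|->] [->|->]; congruence. Qed.

Lemma has_rank_uniq T (indep : set T -> Prop) A r r' :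
  (forall S S', S `<=` S' -> indep S' -> indep S) ->
  has_rank indep A r -> has_rank indep A r' -> r = r'.
Proof.
move=> dc [hr nr] [hr' nr']; apply/eqP; rewrite eqn_leq; apply/andP; split; rewrite leqNgt.
  by apply/negP => lt; apply: nr'; exact: rank_ge_le dc lt hr.
by apply/negP => lt; apply: nr; exact: rank_ge_le dc lt hr'.
Qed.

Section LineMatroid.
Variables (T : Type) (G : set T) (P : set (set T)).

Definition line_indep (S : set T) : Prop :=
  S `<=` G /\
  (forall A B C D, S A -> S B -> S C -> S D -> A <> B -> A <> C -> A <> D ->
     B <> C -> B <> D -> C <> D -> False) /\
  (forall A B C, S A -> S B -> S C -> A <> B -> A <> C -> B <> C -> ~ collinear P A B C).

Lemma line_indep_sub S S' : S `<=` S' -> line_indep S' -> line_indep S.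
Proof.
move=> s [h1 [h2 h3]]; split; first by move=> x /s /h1.
split; first by move=> A B C D /s SA /s SB /s SC /s SD; apply: h2.
by move=> A B C /s SA /s SB /s SC; apply: h3.
Qed.

Lemma line_indep3 X Y Z : G X -> G Y -> G Z -> noncollinear P X Y Z -> line_indep [set X; Y; Z].
Proof.
move=> GX GY GZ [_ [_ [_ nc]]]; split; first by move=> x [[->|->]|->].
split; first by move=> A B C D hA hB hC hD; apply: (set3_no4 hA hB hC hD).
move=> A B C hA hB hC ab ac bc [B0 [PB [bA [bB bC]]]].
have cov := set3_cover hA hB hC ab ac bc.
apply: nc; exists B0; do !split=> //.
- by case: (cov X) => [|->|[->|->]] //; left; left.
- by case: (cov Y) => [|->|[->|->]] //; left; right.
- by case: (cov Z) => [|->|[->|->]] //; right.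
Qed.

Lemma line_indep2 X Y : G X -> G Y -> line_indep [set X; Y].
Proof.
move=> GX GY; split; first by move=> x [->|->].
split; first by move=> A B C D hA hB hC _ ab ac _ bc; exfalso; exact: (set2_no3 hA hB hC ab ac bc).
by move=> A B C hA hB hC ab ac bc; exfalso; exact: (set2_no3 hA hB hC ab ac bc).
Qed.

Lemma line_rank_ge3P S : S `<=` G ->
  rank_ge line_indep S 3 <-> exists X Y Z, S X /\ S Y /\ S Z /\ noncollinear P X Y Z.
Proof.
move=> SG; rewrite rank_ge3P; split.
  case=> a [b [c [ab [ac [bc [Sa [Sb [Sc [_ [_ h3]]]]]]]]]].
  exists a, b, c; do 6!split=> //.
  by apply: h3 => //; [left; left|left; right|right].
case=> X [Y [Z [SX [SY [SZ nc]]]]]; have [XY [XZ [YZ _]]] := nc.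
by exists X, Y, Z; do 6!split=> //; apply: line_indep3 => //; apply: SG.
Qed.

Lemma line_rank_ge2P S : S `<=` G -> rank_ge line_indep S 2 <-> exists X Y, S X /\ S Y /\ X <> Y.
Proof.
move=> SG; rewrite rank_ge2P; split.
  by case=> a [b [ab [Sa [Sb _]]]]; exists a, b.
case=> X [Y [SX [SY XY]]]; exists X, Y; do 3!split=> //.
by apply: line_indep2; apply: SG.
Qed.

Lemma line_rank_lt4 S : ~ rank_ge line_indep S 4.
Proof.
case/rank_ge4_distinct=> a [b [c [d [[ab ac ad bc bd] [cd [_ [h2 _]]]]]]].
by apply: (h2 a b c d) => //; [left; left; left|left; left; right|left; right|right].
Qed.

Hypothesis tpP : two_partition G P.

Lemma line_has_rank3 : has_rank line_indep G 3.
Proof.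
split; last exact: line_rank_lt4.
apply/line_rank_ge3P => //.
by have [X [Y [Z [GX [GY [GZ nc]]]]]] := exists_noncollinear tpP; exists X, Y, Z.
Qed.

Lemma rank2_sub_block S B X Y : S `<=` G -> ~ rank_ge line_indep S 3 ->
  P B -> B X -> B Y -> X <> Y -> S X -> S Y -> S `<=` B.
Proof.
move=> SG nr PB BX BY XY SX SY Z SZ.
have [->|ZX] := EM (Z = X) => //; have [->|ZY] := EM (Z = Y) => //.
have [[B' [PB' [b1 [b2 b3]]]]|nc] := EM (collinear P X Y Z).
  by rewrite (block_unique tpP PB PB' BX BY b1 b2 XY).
case: nr; apply/line_rank_ge3P => //; exists X, Y, Z; split=> //; split=> //; split=> //.
by apply: (noncollinear_of_not_collinear tpP) => //; exact: SG.
Qed.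

Lemma block_has_rank2 B : P B -> has_rank line_indep B 2.
Proof.
move=> PB; have BG : B `<=` G by move=> x; exact: (block_sub tpP PB).
split.
  have [_ [_ [h2 _]]] := tpP; have [X [Y [? [? ?]]]] := h2 _ PB.
  by apply/line_rank_ge2P => //; exists X, Y.
case/line_rank_ge3P=> // X [Y [Z [BX [BY [BZ [_ [_ [_ nc]]]]]]]].
by apply: nc; exists B.
Qed.

Lemma line_hyperplanes : hyperplanes line_indep G = P.
Proof.
have dc : forall S S', S `<=` S' -> line_indep S' -> line_indep S by exact: line_indep_sub.
apply/seteqP; split=> H.
  case=> r [hr [HG [[h2 nh3] mx]]].
  rewrite -(has_rank_uniq dc line_has_rank3 hr) /= in h2 nh3 mx.
  case/line_rank_ge2P: h2 => // X [Y [HX [HY XY]]].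
  have [B [PB [BX BY]]] := block_through tpP (HG _ HX) (HG _ HY) XY.
  rewrite -(mx B (rank2_sub_block HG nh3 PB BX BY XY HX HY)) //.
    by move=> x; exact: (block_sub tpP PB).
  exact: block_has_rank2.
move=> PH; have HG : H `<=` G by move=> x; exact: (block_sub tpP PH).
exists 3; split; first exact: line_has_rank3.
split=> //; split; first exact: block_has_rank2.
move=> H' HH' H'G [_ nh3].
have [_ [_ [h2 _]]] := tpP; have [X [Y [HX [HY XY]]]] := h2 _ PH.
apply/seteqP; split=> //.
exact: rank2_sub_block H'G nh3 PH HX HY XY (HH' _ HX) (HH' _ HY).
Qed.

End LineMatroid.

Section Cosets.
Variables (n : nat) (L : set (Zn n)).
Hypothesis sL : is_sublattice L.

Lemma sublattice0 : L 0.
Proof. by case: sL. Qed.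

Lemma sublatticeB a b : L a -> L b -> L (a - b).
Proof. by case: sL => _; apply. Qed.

Lemma sublatticeN a : L a -> L (- a).
Proof. by move=> La; rewrite -sub0r; apply: sublatticeB => //; apply: sublattice0. Qed.

Lemma sublatticeD a b : L a -> L b -> L (a + b).
Proof. by move=> La Lb; rewrite -[b]opprK; apply: sublatticeB => //; apply: sublatticeN. Qed.

Lemma sublattice_sym a b : L (a - b) -> L (b - a).
Proof. by move=> h; rewrite -opprB; apply: sublatticeN. Qed.

Lemma coset_eqP a b : coset L a = coset L b <-> L (a - b).
Proof.
split=> [e|h].
  have : coset L b b by rewrite /coset /= subrr; apply: sublattice0.
  by rewrite -e /coset /= => /sublattice_sym.
apply/seteqP; split=> c; rewrite /coset /= => hc.
  by have := sublatticeD hc h; rewrite addrA subrK.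
by have := sublatticeB hc h; rewrite opprB addrA subrK.
Qed.

End Cosets.

Lemma coset_neq n (L : set (Zn n)) a b : coset L a <> coset L b -> a <> b.
Proof. by move=> h e; apply: h; rewrite e. Qed.

Lemma quotient_coset n (L : set (Zn n)) a : quotient L (coset L a).
Proof. by exists a. Qed.

Lemma transl_coset n (L : set (Zn n)) u a : transl u (coset L a) = coset L (a + u).
Proof. by apply/seteqP; split=> b; rewrite /transl /coset /= opprD addrA addrAC. Qed.

Lemma translNK n (u : Zn n) X : transl (- u) (transl u X) = X.
Proof. by apply/seteqP; split=> b; rewrite /transl /= opprK addrK. Qed.

Lemma translK n (u : Zn n) X : transl u (transl (- u) X) = X.
Proof. by apply/seteqP; split=> b; rewrite /transl /= opprK subrK. Qed.

Lemma transl_inj n (u : Zn n) : injective (transl u).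
Proof. by move=> X Y e; rewrite -(translNK u X) e translNK. Qed.

Lemma quotient_transl n (L : set (Zn n)) u X : quotient L X -> quotient L (transl u X).
Proof. by case=> a _ <-; rewrite transl_coset; apply: quotient_coset. Qed.

Lemma invariant_transl n (P : set (set (set (Zn n)))) u B : invariant_collection P -> P B ->
  P (transl u @` B).
Proof. by move=> iP PB; rewrite -(iP u); exists B. Qed.

Lemma invariant_untransl n (P : set (set (set (Zn n)))) u B' : invariant_collection P ->
  P B' -> exists2 B, P B & B' = transl u @` B.
Proof.
move=> iP PB'; have : ((fun B => transl u @` B) @` P) B' by rewrite (iP u).
by case=> B PB <-; exists B.
Qed.

Section FiniteSets.
Variable K : choiceType.
Implicit Types (f g h : {fset K}) (a b c d x : K).

Lemma fset_ext f g : (forall x, x \in f <-> x \in g) -> f = g.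
Proof. by move=> e; apply/fsetP => x; apply/idP/idP => /e. Qed.

Lemma in_fset1P a x : x \in [fset a]%fset <-> x = a.
Proof. by rewrite in_fset1; split=> [/eqP|->]. Qed.

Lemma in_fset2P a b x : x \in [fset a; b]%fset <-> x = a \/ x = b.
Proof.
rewrite in_fset2; split; first by case/orP=> /eqP; tauto.
by case=> ->; rewrite eqxx ?orbT.
Qed.

Lemma in_fset3P a b c x : x \in [fset a; b; c]%fset <-> x = a \/ x = b \/ x = c.
Proof.
rewrite !in_fsetU !in_fset1; split; first by case/orP=> [/orP[]|] /eqP; tauto.
by case=> [->|[->|->]]; rewrite eqxx ?orbT.
Qed.

Lemma in_fset4P a b c d x :
  x \in [fset a; b; c; d]%fset <-> x = a \/ x = b \/ x = c \/ x = d.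
Proof.
rewrite !in_fsetU !in_fset1; split; first by case/orP=> [/orP[/orP[]|]|] /eqP; tauto.
by case=> [->|[->|[->|->]]]; rewrite eqxx ?orbT.
Qed.

Lemma in_fsepP f (D : set K) x : x \in [fset y in f | `[< D y >]]%fset <-> x \in f /\ D x.
Proof. by rewrite !inE; split=> [/andP[-> /asboolP]|[-> /asboolP ->]]. Qed.

Lemma fset2C a b : [fset a; b]%fset = [fset b; a]%fset.
Proof. by apply: fset_ext => x; rewrite !in_fset2P; tauto. Qed.

Lemma fset3C12 a b c : [fset a; b; c]%fset = [fset b; a; c]%fset.
Proof. by apply: fset_ext => x; rewrite !in_fset3P; tauto. Qed.

Lemma fset3C23 a b c : [fset a; b; c]%fset = [fset a; c; b]%fset.
Proof. by apply: fset_ext => x; rewrite !in_fset3P; tauto. Qed.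

Lemma fset2_id a : [fset a; a]%fset = [fset a]%fset.
Proof. by apply: fset_ext => x; rewrite in_fset2P in_fset1P; tauto. Qed.

Lemma fset_neq0 f x : x \in f -> f != fset0.
Proof. by move=> xf; apply/negP => /eqP e; move: xf; rewrite e in_fset0. Qed.

Lemma fproper_card f g y : (forall x, x \in g -> x \in f) -> y \in f -> y \notin g ->
  (#|` g| < #|` f|)%N.
Proof.
move=> s yf yg; apply: fproper_ltn_card; rewrite fproperE; apply/andP; split.
  by apply/fsubsetP => x /s.
by apply/negP => /fsubsetP /(_ y yf); apply/negP.
Qed.

Lemma minimal_dependent (indep : set K -> Prop) :
  (forall A B, A `<=` B -> indep B -> indep A) -> indep set0 ->
  forall F : {fset K}, ~ indep [set x | x \in F] ->
  exists C : {fset K}, (forall x, x \in C -> x \in F) /\ ~ indep [set x | x \in C] /\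
     (forall D, D `<` [set x | x \in C] -> indep D).
Proof.
move=> dc I0 F; move: {2}#|`F|%fset (leqnn #|`F|%fset) => k.
elim: k F => [|k IH] F hk nI.
  case: nI; apply: (dc _ set0) => // x /=.
  by move: hk; rewrite leqn0 cardfs_eq0 => /eqP ->.
have [hall|] := EM (forall D, D `<` [set x | x \in F] -> indep D); first by exists F.
move/existsNP=> [D /not_implyP [[DF FD] nID]].
set F' := [fset y in F | `[< D y >]]%fset.
have eF : [set x | x \in F'] = D.
  by apply/seteqP; split=> y; rewrite /= in_fsepP; [case|split=> //; apply: DF].
have [||C [CF' rest]] := IH F'.
- rewrite -ltnS; apply: leq_trans hk; apply: fproper_ltn_card; rewrite fproperE.
  apply/andP; split; first by apply/fsubsetP => y /in_fsepP [].
  by apply/negP => /fsubsetP s; apply: FD => y Fy; rewrite -eF; exact: s.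
- by rewrite eF.
by exists C; split=> // x /CF' /in_fsepP [].
Qed.

Lemma fset_small_cases g x : x \in g ->
  [\/ g = [fset x]%fset,
       exists y, y <> x /\ g = [fset x; y]%fset,
       exists y z, [/\ y <> x, z <> x & z <> y] /\ g = [fset x; y; z]%fset |
       exists y z w, [/\ y \in g, z \in g & w \in g] /\
         [/\ y <> x, z <> x, z <> y & [/\ w <> x, w <> y & w <> z]]].
Proof.
move=> xg.
have [[y [yg yx]]|noy] := EM (exists y, y \in g /\ y <> x); last first.
  apply: Or41; apply: fset_ext => z; rewrite in_fset1P; split=> [zg|->] //.
  by apply: contrapT => zx; apply: noy; exists z.
have [[z [zg [zx zy]]]|noz] := EM (exists z, z \in g /\ z <> x /\ z <> y); last first.
  apply: Or42; exists y; split=> //; apply: fset_ext => z; rewrite in_fset2P.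
  split=> [zg|[->|->]] //.
  by apply: contrapT => /not_orP [zx zy]; apply: noz; exists z.
have [[w [wg [wx [wy wz]]]]|now] := EM (exists w, w \in g /\ w <> x /\ w <> y /\ w <> z).
  by apply: Or44; exists y, z, w.
apply: Or43; exists y, z; split=> //; apply: fset_ext => w; rewrite in_fset3P.
split=> [wg|[->|[->|->]]] //.
by apply: contrapT => /not_orP [wx /not_orP [wy wz]]; apply: now; exists w.
Qed.

End FiniteSets.

Lemma in_Bmul n (f g : Bpoly n) x :
  x \in Bmul g f <-> exists a b, a \in g /\ b \in f /\ x = a + b.
Proof.
split; first by case/imfset2P=> a ag [b bf ->]; exists a, b.
by case=> a [b [ag [bf ->]]]; apply/imfset2P; exists a => //; exists b.
Qed.

Lemma in_Badd n (f g : Bpoly n) x : x \in Badd f g <-> x \in f \/ x \in g.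
Proof. by rewrite /Badd in_fsetU; split=> [/orP|[]->]; rewrite ?orbT. Qed.

Lemma in_Bmul_monomial n (f : Bpoly n) w x : x \in Bmul [fset w]%fset f <-> x - w \in f.
Proof.
rewrite in_Bmul; split; first by case=> a [b [/in_fset1P -> [bf ->]]]; rewrite addrAC subrr add0r.
by move=> h; exists w, (x - w); rewrite in_fset1 eqxx; do 2!split=> //; rewrite addrC subrK.
Qed.

Lemma Bmul_monomial2 n (a b w : Zn n) :
  Bmul [fset w]%fset [fset a; b]%fset = [fset (a + w)%R; (b + w)%R]%fset.
Proof.
apply: fset_ext => x; rewrite in_Bmul_monomial !in_fset2P.
by split=> [[]<-|[]->]; rewrite ?subrK ?addrK; tauto.
Qed.

Lemma Bmul_monomial3 n (a b c w : Zn n) :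
  Bmul [fset w]%fset [fset a; b; c]%fset = [fset (a + w)%R; (b + w)%R; (c + w)%R]%fset.
Proof.
apply: fset_ext => x; rewrite in_Bmul_monomial !in_fset3P.
by split=> [[<-|[<-|<-]]|[->|[->|->]]]; rewrite ?subrK ?addrK; tauto.
Qed.

Section LiftedMatroid.
Variables (n : nat) (L : set (Zn n)) (P : set (set (set (Zn n)))).

(* The matroid on Z^n pulled back from the line matroid of P on Z^n/L along
   a |-> a + L: a set is independent iff its points lie in distinct cosets,
   it has at most three points, and no three of their cosets are collinear. *)
Definition lift_indep (A : set (Zn n)) : Prop :=
  (forall a b, A a -> A b -> a <> b -> ~ L (a - b)) /\
  (forall a b c d, A a -> A b -> A c -> A d -> a <> b -> a <> c -> a <> d ->
     b <> c -> b <> d -> c <> d -> False) /\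
  (forall a b c, A a -> A b -> A c -> a <> b -> a <> c -> b <> c ->
     ~ collinear P (coset L a) (coset L b) (coset L c)).

Definition lift_span (A : set (Zn n)) (x : Zn n) : Prop :=
  span P (coset L @` A) (coset L x).

(* The candidate tropical ideal: polynomials whose support is a union of
   circuits, i.e. each point of the support is spanned by the others. *)
Definition cyclic_ideal : set (Bpoly n) :=
  [set f | forall x, x \in f -> lift_span (Bsupp f `\ x) x].

Lemma lift_indep_sub A B : A `<=` B -> lift_indep B -> lift_indep A.
Proof.
move=> s [h1 [h2 h3]]; split; first by move=> a b Aa Ab; apply: h1; apply: s.
split; first by move=> a b c d Aa Ab Ac Ad; apply: h2; apply: s.
by move=> a b c Aa Ab Ac; apply: h3; apply: s.
Qed.

Lemma lift_indep_le1 D : (forall x y, D x -> D y -> x = y) -> lift_indep D.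
Proof.
move=> h; split; first by move=> a b Da Db /(_ (h _ _ Da Db)).
split; first by move=> a b c d Da Db _ _ /(_ (h _ _ Da Db)).
by move=> a b c Da Db _ /(_ (h _ _ Da Db)).
Qed.

Lemma lift_indep0 : lift_indep set0.
Proof. by apply: lift_indep_le1. Qed.

Lemma lift_span_mono A B x : A `<=` B -> lift_span A x -> lift_span B x.
Proof. by move=> s; apply: span_mono; apply: image_subset. Qed.

Lemma lift_indep_finitary A :
  (forall F : Bpoly n, Bsupp F `<=` A -> lift_indep (Bsupp F)) -> lift_indep A.
Proof.
move=> h; split.
  move=> a b Aa Ab.
  have [h1 _] : lift_indep (Bsupp [fset a; b]%fset) by apply: h => x /in_fset2P [] ->.
  by apply: h1; apply/in_fset2P; tauto.
split.
  move=> a b c d Aa Ab Ac Ad.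
  have [_ [h2 _]] : lift_indep (Bsupp [fset a; b; c; d]%fset).
    by apply: h => x /in_fset4P [->|[->|[]->]].
  by apply: h2; apply/in_fset4P; tauto.
move=> a b c Aa Ab Ac.
have [_ [_ h3]] : lift_indep (Bsupp [fset a; b; c]%fset).
  by apply: h => x /in_fset3P [->|[]->].
by apply: h3; apply/in_fset3P; tauto.
Qed.

Hypothesis sL : is_sublattice L.

Lemma lift_indep2 a b : lift_indep [set a; b] <-> (a <> b -> ~ L (a - b)).
Proof.
split; first by case=> h1 _ ab; apply: h1 => //; [left|right].
move=> h; split.
  move=> x y [->|->] [->|->] xy; try by case: xy.
    exact: h.
  by move/(sublattice_sym sL); apply: h => e; apply: xy; rewrite e.
split; first by move=> x y z w hx hy hz _ xy xz _ yz; exfalso; exact: (set2_no3 hx hy hz xy xz yz).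
by move=> x y z hx hy hz xy xz yz; exfalso; exact: (set2_no3 hx hy hz xy xz yz).
Qed.

Lemma lift_indep_coset A a b : lift_indep A -> A a -> A b -> a <> b -> coset L a <> coset L b.
Proof. by move=> [h1 _] Aa Ab ab /(coset_eqP sL); apply: h1. Qed.

Lemma lift_indep_not_span A x : lift_indep A -> A x -> ~ lift_span (A `\ x) x.
Proof.
move=> [h1 [h2 h3]] Ax.
case=> [[a [Aa ax] /(coset_eqP sL)]|[H|H]]; first exact: h1.
- case: H => X [Y [[a [Aa ax] <-] [[b [Bb bx] <-] [d c]]]].
  by apply: (h3 a b x) => //; exact: coset_neq d.
- case: H => X [Y [W [[a [Aa ax] <-] [[b [Bb bx] <-] [[c [Cc cx] <-] [d1 [d2 [d3 _]]]]]]]].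
  by apply: (h2 a b c x) => //; apply: coset_neq; eassumption.
Qed.

Lemma lift_indep_extend B x : lift_indep B -> ~ B x -> ~ lift_span B x ->
  lift_indep (B `|` [set x]).
Proof.
move=> IB nBx ncl; have [h1 [h2 h3]] := IB.
have i1 b : B b -> coset L x <> coset L b by move=> Bb e; apply: ncl; left; exists b.
have K2 b c : B b -> B c -> b <> c -> ~ collinear P (coset L b) (coset L c) (coset L x).
  move=> Bb Bc d cl; apply: ncl; right; left; exists (coset L b), (coset L c).
  split; first by exists b. split; first by exists c.
  by split=> //; exact: lift_indep_coset IB Bb Bc d.
have K3 b c d : B b -> B c -> B d -> b <> c -> b <> d -> c <> d -> False.
  move=> Bb Bc Bd dbc dbd dcd; apply: ncl; right; right.
  exists (coset L b), (coset L c), (coset L d).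
  split; first by exists b. split; first by exists c. split; first by exists d.
  split; first exact: lift_indep_coset IB Bb Bc dbc.
  split; first exact: lift_indep_coset IB Bb Bd dbd.
  split; first exact: lift_indep_coset IB Bc Bd dcd.
  exact: h3.
split.
  move=> a b [Ba|->] [Bb|->] dab; [exact: h1| | |by []].
  - by move/(coset_eqP sL) => e; exact: (i1 a Ba (esym e)).
  - by move/(coset_eqP sL) => e; exact: (i1 b Bb e).
split.
  move=> a b c d [Ba|ea] [Bb|eb] [Bc|ec] [Bd|ed] dab dac dad dbc dbd dcd;
    rewrite ?ea ?eb ?ec ?ed in dab dac dad dbc dbd dcd; try congruence.
  - exact: h2 Ba Bb Bc Bd dab dac dad dbc dbd dcd.
  - exact: K3 Ba Bb Bc dab dac dbc.
  - exact: K3 Ba Bb Bd dab dad dbd.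
  - exact: K3 Ba Bc Bd dac dad dcd.
  - exact: K3 Bb Bc Bd dbc dbd dcd.
move=> a b c [Ba|ea] [Bb|eb] [Bc|ec] dab dac dbc;
  rewrite ?ea ?eb ?ec in dab dac dbc |- *; try congruence.
- exact: h3 Ba Bb Bc dab dac dbc.
- exact: K2 Ba Bb dab.
- by move=> h; apply: (K2 _ _ Ba Bc dac); exact: collinear23 h.
- by move=> h; apply: (K2 _ _ Bb Bc dbc); exact: collinear23 (collinear12 h).
Qed.

Lemma indepM_cyclic_ideal A : indepM cyclic_ideal A <-> lift_indep A.
Proof.
split; last first.
  move=> IA f If nf sf; case/fset0Pn: nf => x xf.
  apply: (lift_indep_not_span IA (sf _ xf)).
  by apply: lift_span_mono (If x xf) => y [fy yx]; split=> //; exact: sf.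
move=> iA; apply: lift_indep_finitary => F sF; apply: contrapT => nI.
have [C [CF [nIC minC]]] := minimal_dependent lift_indep_sub lift_indep0 nI.
apply: (iA C); last by move=> y /CF; apply: sF.
- move=> x xC; apply: contrapT => nsp; apply: nIC.
  have -> : [set y | y \in C] = (Bsupp C `\ x) `|` [set x].
    by apply/seteqP; split=> y; [have [->|yx] := EM (y = x); [right|left]|case=> [[]|->]].
  apply: lift_indep_extend => //; last by case=> _; apply.
  apply: minC; split; first by move=> y [].
  by move=> h; case: (h x xC) => _; apply.
- apply/negP => /eqP C0; apply: nIC; rewrite C0.
  by apply: lift_indep_le1 => x y; rewrite /= in_fset0.
Qed.

End LiftedMatroid.

Lemma span_image T (P : set (set T)) (tau : T -> T) K Z : injective tau ->
  (forall B, P B -> P (tau @` B)) -> (forall B', P B' -> exists2 B, P B & B' = tau @` B) ->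
  span P K Z -> span P (tau @` K) (tau Z).
Proof.
move=> it h1 h2 [KZ|[[X [Y [KX [KY [d [B [PB [BX [BY BZ]]]]]]]]]|[X [Y [W [KX [KY [KW [d1 [d2 [d3 nc]]]]]]]]]]].
- by left; exists Z.
- right; left; exists (tau X), (tau Y); split; first by exists X.
  split; first by exists Y. split; first by move/it.
  by exists (tau @` B); split; [exact: h1|split; [exists X|split; [exists Y|exists Z]]].
- right; right; exists (tau X), (tau Y), (tau W).
  split; first by exists X. split; first by exists Y. split; first by exists W.
  split; first by move/it. split; first by move/it. split; first by move/it.
  case=> B' [PB' [b1 [b2 b3]]]; case: (h2 _ PB') => B0 PB0 e; subst B'.
  case: b1 => x1 B1 /it e1; case: b2 => x2 B2 /it e2; case: b3 => x3 B3 /it e3.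
  by subst; apply: nc; exists B0.
Qed.

Section CyclicIdeal.
Variables (n : nat) (L : set (Zn n)) (P : set (set (set (Zn n)))).
Hypothesis sL : is_sublattice L.
Hypothesis tpP : two_partition (quotient L) P.
Hypothesis iP : invariant_collection P.

Lemma lift_span_shift A b a : lift_span L P A b -> lift_span L P ((fun y => y + a) @` A) (b + a).
Proof.
rewrite /lift_span -(transl_coset L a b).
have -> : coset L @` ((fun y => y + a) @` A) = transl a @` (coset L @` A).
  apply/seteqP; split=> X.
    by case=> y [z Az <-] <-; exists (coset L z); [exists z|rewrite transl_coset].
  by case=> Y [z Az <-] <-; exists (z + a); [exists z|rewrite transl_coset].
apply: span_image; first exact: transl_inj.
  by move=> B; apply: invariant_transl.
by move=> B; apply: invariant_untransl.
Qed.

Lemma lift_span_absorb A u y :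
  lift_span L P A u -> lift_span L P (A `|` [set u]) y -> lift_span L P A y.
Proof.
move=> cu; rewrite /lift_span image_setU image_set1 => cy.
by apply: (span_absorb tpP _ cu cy) => X [a _ <-]; apply: quotient_coset.
Qed.

Lemma lift_span_exchange A z y :
  lift_span L P (A `|` [set z]) y -> ~ lift_span L P A y -> lift_span L P (A `|` [set y]) z.
Proof. by rewrite /lift_span !image_setU !image_set1; apply: span_exchange. Qed.

(* cyclic_ideal L P is an ideal: supports are closed under unions, and under
   translations because P is invariant. *)
Lemma cyclic_ideal_is_ideal : is_ideal (cyclic_ideal L P).
Proof.
split; first by move=> x; rewrite in_fset0.
split.
  move=> f g If Ig x /in_Badd [xf|xg].
    by apply: lift_span_mono (If x xf) => y [yf yx]; split=> //; apply/in_Badd; left.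
  by apply: lift_span_mono (Ig x xg) => y [yf yx]; split=> //; apply/in_Badd; right.
move=> f g If x /in_Bmul [a [b [ag [bf ->]]]].
rewrite addrC; apply: lift_span_mono (lift_span_shift a (If b bf)).
move=> _ [y [yf yb] <-]; split; last by move/addIr.
by apply/in_Bmul; exists a, y; do 2!split=> //; rewrite addrC.
Qed.

Lemma lift_span_drop_coloops (S : set (Zn n)) y (s : seq (Zn n)) :
  S y -> lift_span L P (S `\ y) y ->
  (forall z, z \in s -> S z /\ ~ lift_span L P (S `\ z) z) ->
  lift_span L P ((S `\` [set w | w \in s]) `\ y) y.
Proof.
move=> Sy cy; elim: s => [|z s IH] hs.
  by apply: lift_span_mono cy => w [Sw wy]; split=> //; split.
have [Sz nz] := hs z (mem_head z s).
have IH' := IH (fun w ws => hs w (@mem_behead _ (z :: s) w ws)).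
have yz : y <> z by move=> e; subst z.
set T := S `\` [set w | w \in s] in IH'.
have c : lift_span L P (((T `\ z) `\ y) `|` [set z]) y.
  apply: lift_span_mono IH' => w [[Sw ws] wy].
  by have [->|wz] := EM (w = z); [right|left; split=> //; split].
have [h|h] := EM (lift_span L P ((T `\ z) `\ y) y).
  apply: lift_span_mono h => w [[[Sw ws] wz] wy]; do 2!split=> //.
  by rewrite /= in_cons => /orP [/eqP|].
case: nz; apply: lift_span_mono (lift_span_exchange c h) => w [[[[Sw _] wz] _]|->].
  by split.
by split=> // e; apply: yz.
Qed.

Lemma cyclic_ideal_span_sym_diff f g u x : cyclic_ideal L P f -> cyclic_ideal L P g ->
  Bsupp f u -> Bsupp g u -> Bsupp f x -> ~ Bsupp g x ->
  lift_span L P (((Bsupp f `|` Bsupp g) `\ u) `\ x) x.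
Proof.
move=> If Ig uf ug xf xg.
apply: (lift_span_absorb (u := u)).
  apply: lift_span_mono (Ig u ug) => w [wg wu]; do 2?split=> //; first by right.
  by move=> e; apply: xg; rewrite -e.
apply: lift_span_mono (If x xf) => w [wf wx].
have [->|wu] := EM (w = u); [by right|left].
by do 2!split=> //; left.
Qed.

(* cyclic_ideal L P satisfies monomial elimination: the witness h is the set
   (supp f U supp g) \ u with its coloops removed. *)
Lemma cyclic_ideal_elim f g u : cyclic_ideal L P f -> cyclic_ideal L P g ->
  Bsupp f u -> Bsupp g u ->
  exists h, cyclic_ideal L P h /\
    ((Bsupp f `\` Bsupp g) `|` (Bsupp g `\` Bsupp f)) `<=` Bsupp h /\
    Bsupp h `<=` ((Bsupp f `|` Bsupp g) `\ u).
Proof.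
move=> If Ig uf ug; set S := (Bsupp f `|` Bsupp g) `\ u.
have inS y : y \in (f `|` g)%fset -> y <> u -> S y.
  by case/fsetUP => yfg yu; split=> //; [left|right].
have inFG y : S y -> y \in (f `|` g)%fset by case=> [[yf|yg] _]; apply/fsetUP; [left|right].
set h := [fset y in (f `|` g)%fset | `[< y <> u /\ lift_span L P (S `\ y) y >]]%fset.
have hE y : y \in h <-> S y /\ lift_span L P (S `\ y) y.
  rewrite in_fsepP; split; first by case=> yfg [yu cy]; split=> //; apply: inS.
  by case=> Sy cy; split; [apply: inFG|split=> //; case: Sy].
exists h; split; last first.
  split; last by move=> x /hE [].
  move=> x [[xf xg]|[xg xf]]; apply/hE.
  - split; first by split; [left|move=> e; apply: xg; rewrite e].
    exact: (cyclic_ideal_span_sym_diff If Ig uf ug xf xg).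
  - split; first by split; [right|move=> e; apply: xf; rewrite e].
    by rewrite /S setUC; exact: (cyclic_ideal_span_sym_diff Ig If ug uf xg xf).
move=> y /hE [Sy cy].
set coloops := [fset z in (f `|` g)%fset | `[< z <> u /\ ~ lift_span L P (S `\ z) z >]]%fset.
have hD z : z \in coloops -> S z /\ ~ lift_span L P (S `\ z) z.
  by case/in_fsepP => zfg [zu nz]; split=> //; apply: inS.
apply: lift_span_mono (lift_span_drop_coloops Sy cy hD) => w [[Sw wD] wy]; split=> //.
apply/hE; split=> //; apply: contrapT => nw; apply: wD; apply/in_fsepP.
by split; [apply: inFG|split=> //; case: Sw].
Qed.

End CyclicIdeal.

Section Simplification.
Variables (n : nat) (I : set (Bpoly n)) (L : set (Zn n)) (P : set (set (set (Zn n)))).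
Hypothesis sL : is_sublattice L.
Hypothesis indepI : forall A, indepM I A <-> lift_indep L P A.

Lemma circM_lift C : circM I C <-> ~ lift_indep L P C /\ forall D, D `<` C -> lift_indep L P D.
Proof. by split; case=> h1 h2; split; [move/indepI|move=> D /h2 /indepI|move/indepI|move=> D /h2 /indepI]. Qed.

Lemma pclass_lift : pclass I = coset L.
Proof.
apply: funext => a; apply/seteqP; split=> b; rewrite /pclass /parallel /coset /=.
  case=> [<-|/circM_lift [nI _]]; first by rewrite subrr; apply: sublattice0.
  apply: (sublattice_sym sL); apply: contrapT => nL; apply: nI; exact/lift_indep2.
move=> Lba; have [->|ab] := EM (a = b); [by left|right].
apply/circM_lift; split.
  by move/(lift_indep2 _ sL) => /(_ ab); apply; apply: (sublattice_sym sL).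
move=> D [DS SD]; apply: lift_indep_le1 => x y Dx Dy; apply: contrapT => xy.
apply: SD => z [->|->].
  by case: (DS _ Dx) => ex; case: (DS _ Dy) => ey; subst; congruence.
by case: (DS _ Dx) => ex; case: (DS _ Dy) => ey; subst; congruence.
Qed.

Lemma si_ground_lift : si_ground I = quotient L.
Proof. by rewrite /si_ground pclass_lift. Qed.

Lemma si_dependent S (F : Bpoly n) :
  (forall a, a \in F -> S (coset L a)) ->
  (forall a b, a \in F -> b \in F -> coset L a = coset L b -> a = b) ->
  ~ lift_indep L P (Bsupp F) -> ~ indep_of_circuits (si_circuits I) S.
Proof.
move=> hS hd nI ioc.
have [C [CF [nIC minC]]] := minimal_dependent (@lift_indep_sub _ L P) (lift_indep0 L P) nI.
apply: (ioc (pclass I @` Bsupp C)).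
  exists (Bsupp C); split; first exact/circM_lift.
  by split=> //; rewrite pclass_lift => a b aC bC; apply: hd; exact: CF.
by move=> X [a aC <-]; rewrite pclass_lift; apply: hS; apply: CF.
Qed.

Lemma si_indep_line S : S `<=` quotient L -> indep_of_circuits (si_circuits I) S ->
  line_indep (quotient L) P S.
Proof.
move=> SQ ioc; split=> //; split.
  move=> X1 X2 X3 X4 S1 S2 S3 S4 d12 d13 d14 d23 d24 d34.
  case: (SQ _ S1) => a1 _ e1; case: (SQ _ S2) => a2 _ e2.
  case: (SQ _ S3) => a3 _ e3; case: (SQ _ S4) => a4 _ e4; subst.
  apply: (@si_dependent _ [fset a1; a2; a3; a4]%fset _ _ _ ioc).
  - by move=> a /in_fset4P [->|[->|[->|->]]].
  - by move=> a b /in_fset4P [->|[->|[->|->]]] /in_fset4P [->|[->|[->|->]]]; congruence.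
  - case=> _ [h2 _]; apply: (h2 a1 a2 a3 a4); try (by apply/in_fset4P; tauto);
    by move=> ?; congruence.
move=> X1 X2 X3 S1 S2 S3 d12 d13 d23 cl.
case: (SQ _ S1) => a1 _ e1; case: (SQ _ S2) => a2 _ e2; case: (SQ _ S3) => a3 _ e3; subst.
apply: (@si_dependent _ [fset a1; a2; a3]%fset _ _ _ ioc).
- by move=> a /in_fset3P [->|[->|->]].
- by move=> a b /in_fset3P [->|[->|->]] /in_fset3P [->|[->|->]]; congruence.
- case=> _ [_ h3]; apply: (h3 a1 a2 a3 _ _ _ _ _ _ cl); try (by apply/in_fset3P; tauto);
  by move=> ?; congruence.
Qed.

Lemma line_si_indep S : line_indep (quotient L) P S -> indep_of_circuits (si_circuits I) S.
Proof.
case=> SQ [h2 h3] D [C [cC [hd ->]]] DS.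
move/circM_lift: cC => [nIC _]; apply: nIC.
have hc a : C a -> S (coset L a) by move=> Ca; rewrite -pclass_lift; apply: DS; exists a.
have hd' a b : C a -> C b -> a <> b -> coset L a <> coset L b.
  by move=> Ca Cb ab e; apply: ab; apply: hd => //; rewrite pclass_lift.
split; first by move=> a b Ca Cb ab /(coset_eqP sL); apply: hd' Ca Cb ab.
split.
  move=> a b c d Ca Cb Cc Cd ab ac ad bc bd cd.
  by apply: (h2 _ _ _ _ (hc _ Ca) (hc _ Cb) (hc _ Cc) (hc _ Cd)); apply: hd'.
move=> a b c Ca Cb Cc ab ac bc.
by apply: (h3 _ _ _ (hc _ Ca) (hc _ Cb) (hc _ Cc)); apply: hd'.
Qed.

Lemma si_indep_lift :
  (fun A => A `<=` si_ground I /\ indep_of_circuits (si_circuits I) A) =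
  line_indep (quotient L) P.
Proof.
apply: funext => S; apply: propext; rewrite si_ground_lift; split.
  by case; exact: si_indep_line.
by move=> iS; split; [case: iS|exact: line_si_indep].
Qed.

Lemma si_hyperplanes_lift : two_partition (quotient L) P -> si_hyperplanes I = P.
Proof.
by move=> tpP; rewrite /si_hyperplanes si_indep_lift si_ground_lift; exact: line_hyperplanes.
Qed.

End Simplification.

Section Surjectivity.
Variables (n : nat) (L : set (Zn n)) (P : set (set (set (Zn n)))).
Hypothesis sL : is_sublattice L.
Hypothesis tpP : two_partition (quotient L) P.

Lemma lift_span_single A x v : A `<=` [set v] -> lift_span L P A x -> coset L x = coset L v.
Proof.
move=> Av [[y Ay <-]|[[X [Y [[a Aa <-] [[b Ab <-] [d _]]]]]|[X [Y [W [[a Aa <-] [[b Ab <-] [_ [d _]]]]]]]]].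
- by rewrite (Av _ Ay).
- by case: d; rewrite (Av _ Aa) (Av _ Ab).
- by case: d; rewrite (Av _ Aa) (Av _ Ab).
Qed.

Lemma binomial_lattice_cyclic_ideal : binomial_lattice (cyclic_ideal L P) = L.
Proof.
apply/seteqP; split=> w.
  case=> [->|[u [v [Iuv ->]]]]; first exact: sublattice0.
  have /lift_span_single : lift_span L P (Bsupp [fset u; v]%fset `\ u) u.
    by apply: Iuv; apply/in_fset2P; left.
  move=> /(_ v) h; apply/(coset_eqP sL); apply: h => y [/in_fset2P [->|->] yu] //.
  by case: yu.
move=> Lw; have [->|w0] := EM (w = 0); [by left|right].
exists w, 0; rewrite subr0; split=> //.
move=> x /in_fset2P [->|->].
  left; exists 0; first by split; [apply/in_fset2P; right|move=> e; apply: w0].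
  by apply/(coset_eqP sL); rewrite sub0r; apply: sublatticeN.
left; exists w; first by split; [apply/in_fset2P; left|].
by apply/(coset_eqP sL); rewrite subr0.
Qed.

(* The pulled-back matroid has rank 3, since P has a noncollinear triple. *)
Lemma lift_indep_rank3 : has_rank (lift_indep L P) setT 3.
Proof.
split; last first.
  case/rank_ge4_distinct=> a [b [c [d [[ab ac ad bc bd] [cd [_ [h2 _]]]]]]].
  by apply: (h2 a b c d) => //; [left; left; left|left; left; right|left; right|right].
have [X [Y [Z [[a _ <-] [[b _ <-] [[c _ <-] nc]]]]]] := exists_noncollinear tpP.
have [dab [dac [dbc ncl]]] := nc.
apply/rank_ge3P; exists a, b, c.
split; first exact: coset_neq dab. split; first exact: coset_neq dac.
split; first exact: coset_neq dbc.
do 3!(split; first by []).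
split.
  move=> x y hx hy xy /(coset_eqP sL) e; apply: xy.
  by case: hx => [[|]|] ?; case: hy => [[|]|] ?; subst; congruence.
split; first by move=> x y z w hx hy hz hw; apply: (set3_no4 hx hy hz hw).
move=> x y z hx hy hz xy xz yz [B [PB [bx [by_ bz]]]]; apply: ncl; exists B; split=> //.
have cov := set3_cover hx hy hz xy xz yz.
have h t : [set a; b; c] t -> B (coset L t) by move/cov => [->|[->|->]].
by do !split; apply: h; [left; left|left; right|right].
Qed.

Hypothesis iP : invariant_collection P.

Lemma cyclic_ideal_zd3 : zd3_tropical_ideal (cyclic_ideal L P).
Proof.
split; first by split; [exact: cyclic_ideal_is_ideal|exact: cyclic_ideal_elim].
rewrite /zero_dim_of_degree.
have -> : indepM (cyclic_ideal L P) = lift_indep L P.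
  by apply: funext => A; apply: propext; exact: indepM_cyclic_ideal.
exact: lift_indep_rank3.
Qed.

Lemma Phi_cyclic_ideal : Phi (cyclic_ideal L P) = (L, P).
Proof.
rewrite /Phi binomial_lattice_cyclic_ideal (si_hyperplanes_lift sL _ tpP) //.
by move=> A; exact: indepM_cyclic_ideal.
Qed.

End Surjectivity.

Section TropicalIdeal.
Variables (n : nat) (I : set (Bpoly n)).
Hypothesis tropI : is_tropical_ideal I.

Lemma ideal_shift f w : I f -> I (Bmul [fset w]%fset f).
Proof. by case: tropI => [[_ [_ h]] _]; apply: h. Qed.

Lemma ideal_shift2 a b w : I [fset a; b]%fset -> I [fset (a + w)%R; (b + w)%R]%fset.
Proof. by move/(ideal_shift w); rewrite Bmul_monomial2. Qed.

Lemma ideal_elim f g u : I f -> I g -> u \in f -> u \in g -> exists h, I h /\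
    (forall x, x \in f -> x \notin g -> x \in h) /\
    (forall x, x \in g -> x \notin f -> x \in h) /\
    (forall x, x \in h -> (x \in f \/ x \in g) /\ x <> u).
Proof.
case: tropI => _ el If Ig uf ug; have [h [Ih [s1 s2]]] := el f g u If Ig uf ug.
exists h; split=> //; split; first by move=> x xf xg; apply: s1; left; split=> //; apply/negP.
split; first by move=> x xg xf; apply: s1; right; split=> //; apply/negP.
by move=> x /s2 [].
Qed.

Lemma circuit_support C : circM I C -> exists2 g, I g & Bsupp g = C.
Proof.
case=> nI mn; move: nI; rewrite /indepM => /existsNP [g /not_implyP [Ig /not_implyP [nz /contrapT sg]]].
exists g => //; apply/seteqP; split=> // x Cx; apply: contrapT => ng.
have : Bsupp g `<` C by split=> // h; apply: ng; apply: h.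
by move/mn => /(_ g Ig nz); apply.
Qed.

(* Conversely, each point u of the support of f in I lies on a circuit
   contained in supp f: take a polynomial of I through u with support in
   supp f and of minimal size; elimination shows its support is minimal. *)
Lemma circuit_through f u : I f -> u \in f ->
  exists C, circM I C /\ C u /\ C `<=` Bsupp f.
Proof.
move=> If uf.
pose small k := `[< exists g, I g /\ u \in g /\ (forall x, x \in g -> x \in f) /\ #|` g| = k >].
have exsmall : exists k, small k by exists #|` f|; apply/asboolP; exists f.
case: (ex_minnP exsmall) => m /asboolP [g [Ig [ug [gf eg]]]] mmin.
have gmin h : I h -> u \in h -> (forall x, x \in h -> x \in g) -> ~ (#|` h| < #|` g|)%N.
  move=> Ih uh hg lt; have : (m <= #|` h|)%N.
    by apply: mmin; apply/asboolP; exists h; do 3!split=> //; move=> x /hg /gf.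
  by rewrite -eg leqNgt lt.
exists (Bsupp g); split; last by split=> // x /gf.
split; first by move/(_ g Ig (fset_neq0 ug)); apply.
move=> D [DG GD] h Ih nh sh.
have [y yg yD] : exists2 y, y \in g & ~ D y.
  by apply: contrapT => ne; apply: GD => y yg; apply: contrapT => nD; apply: ne; exists y.
have [uh|uh] := EM (u \in h).
  have hg x : x \in h -> x \in g by move/sh/DG.
  by apply: (gmin h Ih uh hg); apply: (@fproper_card _ g h y hg yg); apply/negP => /sh.
case/fset0Pn: nh => w wh; have wg : w \in g by apply: DG; apply: sh.
case: tropI => _ el; have [k [Ik [s1 s2]]] := el g h w Ig Ih wg wh.
have kg x : x \in k -> x \in g by move=> /s2 [[//|/sh /DG //] _].
apply: (gmin k Ik _ kg); first by apply: s1; left.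
apply: (@fproper_card _ g k w kg wg); apply/negP => /s2 [_]; exact.
Qed.

Lemma ideal_circuit_cover f :
  I f <-> forall u, u \in f -> exists C, circM I C /\ C u /\ C `<=` Bsupp f.
Proof.
split=> [If u uf|hc]; first exact: circuit_through.
have [[I0 [IU _]] _] := tropI.
have cover (s : seq (Zn n)) : (forall x, x \in s -> x \in f) ->
    exists g, I g /\ (forall x, x \in s -> x \in g) /\ (forall x, x \in g -> x \in f).
  elim: s => [|x s IH] hs; first by exists (Bzero n); split=> //; split=> // x; rewrite in_fset0.
  have [y ys|g [Ig [sg gf]]] := IH; first by apply: hs; rewrite in_cons ys orbT.
  have [C [cC [Cx Cf]]] := hc x (hs x (mem_head x s)).
  have [g' Ig' eg'] := circuit_support cC.
  exists (Badd g g'); split; first exact: IU.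
  split=> y; last by case/in_Badd => [/gf //|yg']; apply: Cf; rewrite -eg'.
  rewrite in_cons => /orP [/eqP ->|ys]; apply/in_Badd; [right|left; exact: sg].
  by have : Bsupp g' x by rewrite eg'.
have [g [Ig [sg gf]]] := cover (enum_fset f) (fun x => id).
by congr I: Ig; apply: fset_ext => x; split; [apply: gf|apply: sg].
Qed.

End TropicalIdeal.

Section DegreeThreeIdeal.
Variables (n : nat) (I : set (Bpoly n)).
Hypothesis zdI : zd3_tropical_ideal I.

Let tropI : is_tropical_ideal I := zdI.1.

(* A degree-3 ideal contains no monomial: otherwise every singleton would be
   dependent, so M(I) would have rank 0. *)
Lemma no_monomial u : ~ I [fset u]%fset.
Proof.
move=> Iu; have [r3 _] := zdI.2.
case/rank_ge3P: r3 => a [b [c [_ [_ [_ [_ [_ [_ ind]]]]]]]].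
apply: (ind [fset a]%fset).
- have -> : [fset a]%fset = Bmul [fset (a - u)%R]%fset [fset u]%fset.
    apply: fset_ext => x; rewrite in_Bmul_monomial !in_fset1P.
    by split=> [->|/eqP]; [rewrite opprB addrC subrK|rewrite subr_eq addrC subrK => /eqP].
  exact: (ideal_shift tropI).
- by apply/negP => /eqP /fsetP /(_ a); rewrite in_fset1 eqxx in_fset0.
- by move=> x /in_fset1P ->; left; left.
Qed.

Lemma binomialP a b : a <> b -> I [fset a; b]%fset <-> binomial_lattice I (a - b).
Proof.
move=> ab; split; first by move=> h; right; exists a, b.
case=> [/eqP|[u [v [Iuv e]]]]; first by rewrite subr_eq0 => /eqP.
have := ideal_shift2 tropI (a - u) Iuv.
have -> : u + (a - u) = a by rewrite addrC subrK.
suff -> : v + (a - u) = b by [].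
by move/eqP: e; rewrite subr_eq => /eqP ->; rewrite addrAC [u - v - u]addrAC subrr add0r addNKr.
Qed.

(* L_I is a sublattice: two binomials can be translated to share a monomial
   and then eliminated against each other. *)
Lemma binomial_lattice_sublattice : is_sublattice (binomial_lattice I).
Proof.
split; first by left.
move=> a b La Lb.
have [->|b0] := EM (b = 0); first by rewrite subr0.
have [->|a0] := EM (a = 0).
  rewrite sub0r; case: Lb => [//|[u [v [Iuv ->]]]].
  by right; exists v, u; rewrite opprB fset2C.
case: La => [//|[u [v [Iuv ->]]]]; case: Lb => [//|[u' [v' [Iuv' ->]]]].
set p := u' + (v - v').
have -> : u - v - (u' - v') = u - p.
  by rewrite /p [in RHS]opprD !opprB !addrA [LHS]addrAC [u - v - u']addrAC [RHS]addrAC.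
have Ip : I [fset p; v]%fset by have := ideal_shift2 tropI (v - v') Iuv'; rewrite [v' + _]addrC subrK.
have [->|up] := EM (u = p); first by rewrite subrr; left.
have uv : u <> v by move=> e; move: Iuv; rewrite e fset2_id; apply: no_monomial.
have pv : p <> v by move=> e; move: Ip; rewrite e fset2_id; apply: no_monomial.
have [h [Ih [s1 [s2 s3]]]] := ideal_elim tropI Iuv Ip (proj2 (in_fset2P _ _ _) (or_intror erefl))
  (proj2 (in_fset2P _ _ _) (or_intror erefl)).
right; exists u, p; split=> //; congr I: Ih; apply: fset_ext => x; rewrite in_fset2P; split.
  by move/s3 => [[/in_fset2P [->|->]|/in_fset2P [->|->]] xv]; tauto.
case=> ->; first by apply: s1; [apply/in_fset2P; left|apply/negP => /in_fset2P []].
by apply: s2; [apply/in_fset2P; left|apply/negP => /in_fset2P [e|] //; apply: up].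
Qed.

End DegreeThreeIdeal.

Section Lines.
Variables (n : nat) (I : set (Bpoly n)).
Hypothesis zdI : zd3_tropical_ideal I.

Local Notation LI := (binomial_lattice I).
Local Notation cls a := (coset LI a).
Local Notation QI := (quotient LI).

Let sLI : is_sublattice LI := binomial_lattice_sublattice zdI.

Definition trinomial_indep (A : set (Zn n)) : Prop :=
  (forall a b, A a -> A b -> a <> b -> ~ LI (a - b)) /\
  (forall a b c d, A a -> A b -> A c -> A d -> a <> b -> a <> c -> a <> d ->
     b <> c -> b <> d -> c <> d -> False) /\
  (forall a b c, A a -> A b -> A c -> a <> b -> a <> c -> b <> c ->
     ~ I [fset a; b; c]%fset).

Lemma indepM_trinomial A : indepM I A <-> trinomial_indep A.
Proof.
split.
  move=> iA; split.
    move=> a b Aa Ab ab /(binomialP zdI ab) Iab; apply: (iA _ Iab).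
      by apply: (@fset_neq0 _ _ a); apply/in_fset2P; left.
    by move=> x /in_fset2P [->|->].
  split.
    move=> a b c d Aa Ab Ac Ad ab ac ad bc bd cd.
    case: zdI => _ [_]; apply; apply: (rank_ge4_of ab ac ad bc bd cd) => // f If nf sf.
    by apply: (iA f If nf) => x /sf [[[->|->]|->]|->].
  move=> a b c Aa Ab Ac ab ac bc Iabc; apply: (iA _ Iabc).
    by apply: (@fset_neq0 _ _ a); apply/in_fset3P; left.
  by move=> x /in_fset3P [->|[->|->]].
case=> h1 [h2 h3] g Ig /fset0Pn [x xg] sg.
case: (fset_small_cases xg) => [gx|[y [yx gxy]]|[y [z [[yx zx zy] gxyz]]]|].
- by move: Ig; rewrite gx; apply: no_monomial.
- apply: (h1 x y (sg x xg) _ (nesym yx)); first by apply: sg; rewrite gxy; apply/in_fset2P; right.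
  by apply/(binomialP zdI (nesym yx)); rewrite -gxy.
- apply: (h3 x y z) (nesym yx) (nesym zx) (nesym zy) _; rewrite -?gxyz //;
    by apply: sg; rewrite gxyz; apply/in_fset3P; tauto.
- case=> y [z [w [[yg zg wg] [yx zx zy [wx wy wz]]]]].
  by apply: (h2 x y z w (sg _ xg) (sg _ yg) (sg _ zg) (sg _ wg)); apply: nesym.
Qed.

Lemma trinomial_replace a b c b' :
  cls a <> cls b -> cls a <> cls c -> cls b <> cls c -> cls b' = cls b ->
  I [fset a; b; c]%fset -> I [fset a; b'; c]%fset.
Proof.
move=> ab ac bc eb Iabc; have [->|bb] := EM (b' = b) => //.
have Ibb : I [fset b; b']%fset.
  by apply/(binomialP zdI (nesym bb)); apply/(coset_eqP sLI); rewrite eb.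
have [h [Ih [s1 [s2 s3]]]] := ideal_elim zdI.1 Iabc Ibb
  (proj2 (in_fset3P _ _ _ _) (or_intror (or_introl erefl))) (proj2 (in_fset2P _ _ _) (or_introl erefl)).
have nab := coset_neq ab; have nac := coset_neq ac; have nbc := coset_neq bc.
have ab' : a <> b' by move=> e; apply: ab; rewrite e eb.
have cb' : c <> b' by move=> e; apply: bc; rewrite e eb.
congr I: Ih; apply: fset_ext => x; rewrite in_fset3P; split.
  by move/s3 => [[/in_fset3P [->|[->|->]]|/in_fset2P [->|->]] xb]; tauto.
case=> [->|[->|->]].
- by apply: s1; [apply/in_fset3P; left|apply/negP => /in_fset2P []].
- by apply: s2; [apply/in_fset2P; right|apply/negP => /in_fset3P [|[|]] //; apply: nesym].
- by apply: s1; [apply/in_fset3P; right; right|apply/negP => /in_fset2P [e|] //; apply: nbc].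
Qed.

Lemma trinomial_line a b c d : cls a <> cls b -> cls a <> cls c -> cls a <> cls d ->
  cls b <> cls c -> cls b <> cls d -> cls c <> cls d ->
  I [fset a; b; c]%fset -> I [fset a; b; d]%fset -> I [fset a; c; d]%fset.
Proof.
move=> ab ac ad bc bd cd Iabc Iabd.
have nab := coset_neq ab; have nac := coset_neq ac; have nad := coset_neq ad.
have nbc := coset_neq bc; have nbd := coset_neq bd; have ncd := coset_neq cd.
have b_in x : b \in [fset a; b; x]%fset by apply/in_fset3P; right; left.
have [h [Ih [s1 [s2 s3]]]] := ideal_elim zdI.1 Iabc Iabd (b_in c) (b_in d).
have hc : c \in h.
  by apply: s1; [apply/in_fset3P; right; right|apply/negP => /in_fset3P [|[|]] //; apply: nesym].
have hd : d \in h.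
  apply: s2; first by apply/in_fset3P; right; right.
  by apply/negP => /in_fset3P [|[|e]] //; [apply: nesym..|apply: ncd].
have hs x : x \in h -> x = a \/ x = c \/ x = d.
  by move/s3 => [[/in_fset3P [->|[->|->]]|/in_fset3P [->|[->|->]]] xb]; tauto.
have [ha|ha] := EM (a \in h).
  by congr I: Ih; apply: fset_ext => x; rewrite in_fset3P; split=> [/hs|[->|[->|->]]].
(* otherwise h would be the binomial x^c + x^d, putting c and d in one coset *)
case: cd; apply/(coset_eqP sLI)/(binomialP zdI ncd); congr I: Ih.
apply: fset_ext => x; rewrite in_fset2P; split; last by case=> ->.
by move=> xh; case: (hs x xh) => [e|]; [subst x|].
Qed.

Definition trinomial_cosets (X Y Z : set (Zn n)) : Prop :=
  exists a b c, X = cls a /\ Y = cls b /\ Z = cls c /\ I [fset a; b; c]%fset.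

Lemma trinomial_cosets12 X Y Z : trinomial_cosets X Y Z -> trinomial_cosets Y X Z.
Proof. by case=> a [b [c [-> [-> [-> h]]]]]; exists b, a, c; rewrite -fset3C12. Qed.

Lemma trinomial_cosets23 X Y Z : trinomial_cosets X Y Z -> trinomial_cosets X Z Y.
Proof. by case=> a [b [c [-> [-> [-> h]]]]]; exists a, c, b; rewrite -fset3C23. Qed.

Lemma trinomial_of_cosets a b c : cls a <> cls b -> cls a <> cls c -> cls b <> cls c ->
  trinomial_cosets (cls a) (cls b) (cls c) -> I [fset a; b; c]%fset.
Proof.
move=> ab ac bc [a' [b' [c' [ea [eb [ec h]]]]]].
have d1 : cls a' <> cls b' by rewrite -ea -eb.
have d2 : cls a' <> cls c' by rewrite -ea -ec.
have d3 : cls b' <> cls c' by rewrite -eb -ec.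
have h1 : I [fset a'; b; c']%fset := trinomial_replace d1 d2 d3 eb h.
have d4 : cls b <> cls a' by rewrite -ea; apply: nesym.
have d5 : cls b <> cls c' by rewrite -ec.
have h2 : I [fset b; a; c']%fset.
  by apply: (trinomial_replace d4 d5 d2 ea); rewrite -fset3C12.
have d6 : cls a <> cls c' by rewrite -ec.
have d7 : cls c' <> cls b by rewrite -ec; apply: nesym.
have h3 : I [fset a; c; b]%fset.
  by apply: (trinomial_replace d6 ab d7 ec); rewrite -fset3C23 -fset3C12.
by rewrite fset3C23.
Qed.

Lemma trinomial_cosets_line X Y Z W :
  QI X -> QI Y -> QI Z -> QI W -> X <> Y -> X <> Z -> X <> W -> Y <> Z -> Y <> W -> Z <> W ->
  trinomial_cosets X Y Z -> trinomial_cosets X Y W -> trinomial_cosets X Z W.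
Proof.
move=> [a _ <-] [b _ <-] [c _ <-] [d _ <-] ab ac ad bc bd cd h1 h2.
exists a, c, d; do 3!split=> //.
by apply: (trinomial_line ab ac ad bc bd cd); exact: trinomial_of_cosets.
Qed.

Definition line (X Y : set (Zn n)) : set (set (Zn n)) :=
  [set Z | QI Z /\ (Z = X \/ Z = Y \/ trinomial_cosets X Y Z)].

Definition lines : set (set (set (Zn n))) :=
  [set B | exists X Y, QI X /\ QI Y /\ X <> Y /\ B = line X Y].

Lemma line_sym X Y : line X Y = line Y X.
Proof.
apply/seteqP; split=> Z [QZ h]; split=> //;
by case: h => [->|[->|/trinomial_cosets12 h]]; tauto.
Qed.

Lemma line_X X Y : QI X -> line X Y X.
Proof. by move=> QX; split=> //; left. Qed.

Lemma line_Y X Y : QI Y -> line X Y Y.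
Proof. by move=> QY; split=> //; right; left. Qed.

Lemma line_change X Y Z : QI X -> QI Y -> X <> Y -> line X Y Z -> Z <> X -> line X Y = line X Z.
Proof.
move=> QX QY XY [QZ hZ] ZX; have [->|ZY] := EM (Z = Y) => //.
have tZ : trinomial_cosets X Y Z by case: hZ => [//|[//|//]].
apply/seteqP; split=> W [QW hW]; split=> //.
  have [->|WX] := EM (W = X); first by left.
  have [->|WZ] := EM (W = Z); first by right; left.
  case: hW => [//|[->|tW]]; first by right; right; apply: trinomial_cosets23.
  have [->|WY] := EM (W = Y); first by right; right; apply: trinomial_cosets23.
  right; right; apply: (trinomial_cosets_line QX QY QZ QW) tZ tW => //; exact: nesym.
have [->|WX] := EM (W = X); first by left.
have [->|WY] := EM (W = Y); first by right; left.
have [->|WZ] := EM (W = Z); first by right; right.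
case: hW => [//|[->|tW]]; first by right; right.
right; right; apply: (trinomial_cosets_line QX QZ QY QW) (trinomial_cosets23 tZ) tW => //;
  exact: nesym.
Qed.

Lemma line_uniq X Y Z W : QI X -> QI Y -> X <> Y -> line X Y Z -> line X Y W -> Z <> W ->
  line X Y = line Z W.
Proof.
move=> QX QY XY lZ lW ZW; have QZ : QI Z by case: lZ.
have [e|ZX] := EM (Z = X).
  by subst Z; apply: line_change => // e; apply: ZW.
have e1 := line_change QX QY XY lZ ZX.
rewrite e1 line_sym; rewrite e1 line_sym in lW.
by apply: line_change => //; apply: nesym.
Qed.

Lemma lines_two_partition : two_partition QI lines.
Proof.
split; first by move=> B [X [Y [_ [_ [_ ->]]]]] Z [].
split.
  have [r3 _] := zdI.2; case/rank_ge3P: r3 => a [b [c [ab [ac [bc [_ [_ [_ ind]]]]]]]].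
  case/indepM_trinomial: ind => h1 [_ h3].
  have cab : cls a <> cls b by move/(coset_eqP sLI); apply: h1 => //; [left; left|left; right].
  have cac : cls a <> cls c by move/(coset_eqP sLI); apply: h1 => //; [left; left|right].
  have cbc : cls b <> cls c by move/(coset_eqP sLI); apply: h1 => //; [left; right|right].
  exists (line (cls a) (cls b)), (line (cls a) (cls c)).
  split; first by exists (cls a), (cls b); do 3?split=> //; apply: quotient_coset.
  split; first by exists (cls a), (cls c); do 3?split=> //; apply: quotient_coset.
  move=> e; have : line (cls a) (cls b) (cls c) by rewrite e; apply: line_Y; apply: quotient_coset.
  case=> _ [/esym //|[/esym //|]] /(trinomial_of_cosets cab cac cbc).
  by apply: h3 => //; [left; left|left; right|right].
split.
  move=> B [X [Y [QX [QY [XY ->]]]]]; exists X, Y.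
  by split; [exact: line_X|split; [exact: line_Y|]].
move=> Z W QZ QW ZW; exists (line Z W); split.
  by split; [exists Z, W|split; [apply: line_X|apply: line_Y]].
move=> B' [[X [Y [QX [QY [XY ->]]]]] [b1 b2]].
exact: esym (line_uniq QX QY XY b1 b2 ZW).
Qed.

Lemma collinear_lines X Y Z : QI X -> QI Y -> QI Z -> X <> Y -> X <> Z -> Y <> Z ->
  collinear lines X Y Z <-> trinomial_cosets X Y Z.
Proof.
move=> QX QY QZ XY XZ YZ; split.
  case=> B [[U [V [QU [QV [UV ->]]]]] [bX [bY bZ]]].
  rewrite (line_uniq QU QV UV bX bY XY) in bZ.
  by case: bZ => _ [/esym //|[/esym //|]].
move=> t; exists (line X Y); split; first by exists X, Y.
by split; [exact: line_X|split; [exact: line_Y|split=> //; right; right]].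
Qed.

Lemma indepM_lift_lines A : indepM I A <-> lift_indep LI lines A.
Proof.
rewrite indepM_trinomial.
suff collinearE a b c : ~ LI (a - b) -> ~ LI (a - c) -> ~ LI (b - c) ->
    collinear lines (cls a) (cls b) (cls c) <-> I [fset a; b; c]%fset.
  split; case=> h1 [h2 h3]; split=> //; split=> // a b c Aa Ab Ac ab ac bc.
    by rewrite collinearE; [apply: h3|apply: h1..].
  by rewrite -collinearE; [apply: h3|apply: h1..].
move=> nab nac nbc.
have cab : cls a <> cls b by move/(coset_eqP sLI).
have cac : cls a <> cls c by move/(coset_eqP sLI).
have cbc : cls b <> cls c by move/(coset_eqP sLI).
rewrite (collinear_lines (quotient_coset _ _) (quotient_coset _ _) (quotient_coset _ _) cab cac cbc).
by split; [exact: trinomial_of_cosets|exists a, b, c].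
Qed.

Lemma trinomial_cosets_transl u X Y Z :
  trinomial_cosets X Y Z -> trinomial_cosets (transl u X) (transl u Y) (transl u Z).
Proof.
case=> a [b [c [-> [-> [-> h]]]]].
exists (a + u), (b + u), (c + u); rewrite !transl_coset; do 3!split=> //.
by rewrite -Bmul_monomial3; apply: (ideal_shift zdI.1).
Qed.

Lemma line_transl u X Y : transl u @` line X Y = line (transl u X) (transl u Y).
Proof.
apply/seteqP; split.
  move=> _ [Z [QZ hZ] <-]; split; first exact: quotient_transl.
  by case: hZ => [->|[->|t]]; [left|right; left|right; right; exact: trinomial_cosets_transl].
move=> Z' [QZ' hZ']; exists (transl (- u) Z'); last exact: translK.
split; first exact: quotient_transl.
case: hZ' => [->|[->|t]]; [by left; rewrite translNK|by right; left; rewrite translNK|].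
by right; right; have := trinomial_cosets_transl (- u) t; rewrite !translNK.
Qed.

Lemma lines_invariant : invariant_collection lines.
Proof.
move=> u; apply/seteqP; split.
  move=> _ [B [X [Y [QX [QY [XY ->]]]]] <-]; rewrite line_transl.
  exists (transl u X), (transl u Y); do 2?split; try exact: quotient_transl.
  by split=> // /transl_inj.
move=> B [X [Y [QX [QY [XY ->]]]]].
exists (line (transl (- u) X) (transl (- u) Y)); last by rewrite line_transl !translK.
exists (transl (- u) X), (transl (- u) Y); do 2?split; try exact: quotient_transl.
by split=> // /transl_inj.
Qed.

End Lines.

Lemma si_hyperplanes_lines n (I : set (Bpoly n)) : zd3_tropical_ideal I ->
  si_hyperplanes I = lines I.
Proof.
move=> zdI; apply: (si_hyperplanes_lift (binomial_lattice_sublattice zdI)).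
  exact: indepM_lift_lines.
exact: lines_two_partition.
Qed.

Lemma Phi_admissible n (I : set (Bpoly n)) : zd3_tropical_ideal I -> admissible_pair (Phi I).
Proof.
move=> zdI; rewrite /Phi /admissible_pair /= si_hyperplanes_lines //.
split; first exact: binomial_lattice_sublattice.
by split; [exact: lines_two_partition|exact: lines_invariant].
Qed.

Lemma indepM_Phi n (I : set (Bpoly n)) : zd3_tropical_ideal I ->
  indepM I = lift_indep (Phi I).1 (Phi I).2.
Proof.
move=> zdI; apply: funext => A; apply: propext.
by rewrite /Phi /= si_hyperplanes_lines //; exact: indepM_lift_lines.
Qed.

(* Two degree-3 ideals with the same pair have the same matroid, hence the
   same circuits, hence coincide. *)
Lemma Phi_injective n (I J : set (Bpoly n)) : zd3_tropical_ideal I -> zd3_tropical_ideal J ->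
  Phi I = Phi J -> I = J.
Proof.
move=> zI zJ e.
have eC : circM I = circM J by rewrite /circM (indepM_Phi zI) (indepM_Phi zJ) e.
apply: funext => f; apply: propext.
by rewrite (ideal_circuit_cover zI.1) (ideal_circuit_cover zJ.1) eC.
Qed.

Theorem mainTheorem6 (n : nat) :
  (forall I : set (Bpoly n), zd3_tropical_ideal I -> admissible_pair (Phi I)) /\
  (forall I J : set (Bpoly n), zd3_tropical_ideal I -> zd3_tropical_ideal J ->
      Phi I = Phi J -> I = J) /\
  (forall LP : set (Zn n) * set (set (set (Zn n))), admissible_pair LP ->
      exists I : set (Bpoly n), zd3_tropical_ideal I /\ Phi I = LP).
Proof.
split; first exact: Phi_admissible.
split; first exact: Phi_injective.
case=> L P [sL [tpP iP]]; exists (cyclic_ideal L P).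
by split; [exact: cyclic_ideal_zd3|exact: Phi_cyclic_ideal].
Qed.
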